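(* Let $T\ge 1$ (search step budget) and $B\ge 1$ (maximum branching factor) be integers, and suppose the vocabulary contains state tokens $S_1,\dots,S_{TB+1}$, continuous value tokens $V_\alpha$ for $\alpha\in[0,1]$, and the structural markers \texttt{\%}, \texttt{\#}, \texttt{?}. Then there exist 3-layer Transformers (in the model described in the context) with embedding dimension $d=10+TB$ that exactly implement the uniform leaf sampling policy and the greedy leaf sampling policy, respectively, when the search trajectory is encoded sequentially using Leaf-Based Tokenization: for every (partial) search trajectory, when the Leaf-Based-Tokenized trace ending in the token \texttt{?} is given as input, the distribution of the Transformer's next output token equals the distribution over the next state $S_{s_t}$ prescribed by the respective policy.
   Context: Search setting: a hidden finite rooted tree with root state $s_0$, successor (children) function $N$, and at most $TB+1$ states that can appear in a trace (assume exactly $TB+1$ states, each identified with a state token $S_i$). An agent interacts for steps $t=0,1,\dots,T$: at step $t$ it selects a state $s_t$ and the environment reveals a value $v_t\in[0,1]$ (a noisy estimate of the state's value) and the children $N(s_t)$. The frontier is $F_t=\bigl(\bigcup_{i=0}^t N(s_i)\bigr)\setminus\{s_0,\dots,s_t\}$, and $s_{t+1}$ must be chosen from $F_t$. Uniform leaf sampling: $s_t$ is drawn uniformly at random from $F_{t-1}$. Greedy leaf sampling: $s_t=\arg\max_{s\in F_{t-1}}\hat v(s)$, where $\hat v(s)$ is the observed value $v$ of the parent of $s$, with ties broken uniformly at random. Leaf-Based Tokenization: writing $N(s_t)=\{s_{t,1},s_{t,2},\dots\}$, a trajectory $((s_0,v_0,N(s_0)),(s_1,v_1,N(s_1)),\dots)$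 is encoded as the token sequence $\texttt{?}\,S_{s_0}\,\texttt{\%}\,V_{v_0}\,\texttt{\#}\,S_{s_{0,1}}\,S_{s_{0,2}}\cdots\texttt{?}\,S_{s_1}\,\texttt{\%}\,V_{v_1}\,\texttt{\#}\,S_{s_{1,1}}\,S_{s_{1,2}}\cdots\texttt{?}\cdots$; the model must predict the state token immediately after each \texttt{?}. The value token $V_\alpha$ stores $\alpha$ in a dedicated embedding coordinate. Transformer model: each token is embedded in $\mathbb{R}^d$; fixed positional embeddings $p_1,\dots,p_n$ are added, $X^{(0)}=X+[p_1,\dots,p_n]$. A block with matrices $Q,K,V\in\mathbb{R}^{d\times d}$ and a token-wise map $f:\mathbb{R}^d\to\mathbb{R}^d$ (any piecewise continuous function) computes $\mathrm{Attn}(X)=X+VX\,\mathrm{hardmax}(X^\top K^\top QX)$ (causal, each token attending to itself and preceding tokens) and $\mathrm{Block}(X)=\mathrm{Attn}(X)+[f(\mathrm{Attn}(X)_{:,j})]_j$, where $\mathrm{hardmax}(z)_i=\mathbf{1}[z_i=\max_k z_k]/\sum_j\mathbf{1}[z_j=\max_k z_k]$. There is no layer normalization. An $\ell$-layer Transformer applies $\ell$ blocks; the logits are $U X^{(\ell)}_{:,n}$ for an unembedding matrix $U$ applied to the last token, and the next token is the argmax logit with ties broken uniformly at random. *)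

From HB Require Import structures.
From mathcomp Require Import all_boot all_order all_algebra.
From mathcomp Require Import reals.
From Stdlib Require List.
Set Implicit Arguments.
Unset Strict Implicit.
Unset Printing Implicit Defensive.
Import Order.TTheory GRing.Theory Num.Theory.
Local Open Scope ring_scope.

Section Transformer.
Variable R : realType.

(* Tokens.  n = number of states (here TB+1); state i : 'I_n is the   *)
(* token S_{i+1}.  TV a is the value token V_a; only a in [0,1] is in *)
(* the vocabulary (see in_vocab).                                      *)
Inductive token (n : nat) :=
  | TQ
  | TPct
  | THash
  | TS of 'I_n
  | TV of R.

Definition in_vocab n (tok : token n) : Prop :=
  match tok with TV a => 0 <= a <= 1 | _ => True end.

Definition is_value_token n (tok : token n) : bool :=
  match tok with TV _ => true | _ => false end.

Record halfspace (d : nat) := HalfSpace {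
  hs_a : 'rV[R]_d; hs_b : R; hs_strict : bool }.

Definition in_hs d (h : halfspace d) (x : 'cV[R]_d) : bool :=
  if hs_strict h then (hs_a h *m x) 0 0 < hs_b h
  else (hs_a h *m x) 0 0 <= hs_b h.

Definition in_piece d (P : seq (halfspace d)) (x : 'cV[R]_d) : bool :=
  all (fun h => in_hs h x) P.

Definition continuous_on d (A : 'cV[R]_d -> bool) (f : 'cV[R]_d -> 'cV[R]_d) :=
  forall x, A x -> forall eps : R, 0 < eps -> exists2 delta : R, 0 < delta &
    forall y, A y -> (forall i, `|y i 0 - x i 0| < delta) ->
      forall i, `|f y i 0 - f x i 0| < eps.

Definition piecewise_continuous d (f : 'cV[R]_d -> 'cV[R]_d) : Prop :=
  exists Ps : seq (seq (halfspace d)),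
    (forall x, has (fun P => in_piece P x) Ps) /\
    (forall P, List.In P Ps -> continuous_on (in_piece P) f).

Record layer (d : nat) := Layer {
  lQ : 'M[R]_d; lK : 'M[R]_d; lV : 'M[R]_d;
  lf : 'cV[R]_d -> 'cV[R]_d }.

Definition score d (L : layer d) (X : seq 'cV[R]_d) (j i : nat) : R :=
  (((X`_i)^T *m (lK L)^T *m lQ L *m X`_j) 0 0).

Definition attn_col d (L : layer d) (X : seq 'cV[R]_d) (j : nat) : 'cV[R]_d :=
  let sc := score L X j in
  let m := \big[Num.max/sc 0%N]_(i < j.+1) sc i in
  let M := [seq i <- iota 0 j.+1 | sc i == m] in
  X`_j + lV L *m ((size M)%:R^-1 *: \sum_(i <- M) X`_i).

Definition attn d (L : layer d) (X : seq 'cV[R]_d) : seq 'cV[R]_d :=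
  mkseq (attn_col L X) (size X).

Definition block d (L : layer d) (X : seq 'cV[R]_d) : seq 'cV[R]_d :=
  [seq a + lf L a | a <- attn L X].

Record transformer (d n : nat) := Transformer {
  emb : token n -> 'cV[R]_d;
  pos : nat -> 'cV[R]_d;            (* fixed positional embeddings p_1, p_2, ... (0-indexed) *)
  layers : seq (layer d);
  unemb : token n -> 'rV[R]_d }.

Definition wf_transformer d n (M : transformer d n) : Prop :=
  (forall L, List.In L (layers M) -> piecewise_continuous (lf L)) /\
  exists (k : 'I_d) (base : 'cV[R]_d),
    base k 0 = 0 /\
    (forall a : R, emb M (TV n a) = base + a *: delta_mx k 0) /\
    (forall tok, ~~ is_value_token tok -> emb M tok k 0 = 0).

Definition run d n (M : transformer d n) (inp : seq (token n)) : seq 'cV[R]_d :=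
  foldl (fun X L => block L X)
    (mkseq (fun j => emb M (nth (TQ n) inp j) + pos M j) (size inp))
    (layers M).

Definition logit d n (M : transformer d n) (inp : seq (token n)) (tok : token n) : R :=
  (unemb M tok *m (run M inp)`_(size inp).-1) 0 0.

Definition is_argmax d n (M : transformer d n) inp (tok : token n) : Prop :=
  in_vocab tok /\ forall tok', in_vocab tok' -> logit M inp tok' <= logit M inp tok.

Definition next_token_dist d n (M : transformer d n) inp (p : token n -> R) : Prop :=
  exists A : seq (token n),
    A <> [::] /\ List.NoDup A /\
    (forall tok, List.In tok A <-> is_argmax M inp tok) /\
    (forall tok, List.In tok A -> p tok = (size A)%:R^-1) /\
    (forall tok, ~ List.In tok A -> p tok = 0).

Definition is_tree n (B : nat) (root : 'I_n) (N : 'I_n -> seq 'I_n) : Prop :=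
  (forall s, uniq (N s)) /\
  (forall s, (size (N s) <= B)%N) /\
  (forall s, root \notin N s) /\
  (forall x y s, s \in N x -> s \in N y -> x = y) /\
  (forall s, connect (fun x y => y \in N x) root s).

(* a trajectory is the list of (s_i, v_i), i = 0 .. t-1 *)
Definition frontier n (N : 'I_n -> seq 'I_n) (traj : seq ('I_n * R)) : {set 'I_n} :=
  [set s | has (fun sv => s \in N sv.1) traj & s \notin [seq sv.1 | sv <- traj]].

Definition valid_traj n (T : nat) (root : 'I_n) (N : 'I_n -> seq 'I_n)
    (traj : seq ('I_n * R)) : Prop :=
  (1 <= size traj <= T)%N /\
  (head (root, 0) traj).1 = root /\
  (forall sv, List.In sv traj -> 0 <= sv.2 <= 1) /\
  (forall i, (i.+1 < size traj)%N ->
     (nth (root, 0) traj i.+1).1 \in frontier N (take i.+1 traj)) /\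
  frontier N traj != set0.

Definition encode n (N : 'I_n -> seq 'I_n) (traj : seq ('I_n * R)) : seq (token n) :=
  flatten [seq [:: TQ n; TS sv.1; TPct n; TV n sv.2; THash n] ++ map (@TS n) (N sv.1)
          | sv <- traj] ++ [:: TQ n].

Definition uniform_policy n (N : 'I_n -> seq 'I_n) (traj : seq ('I_n * R))
    (tok : token n) : R :=
  match tok with
  | TS s => if s \in frontier N traj then #|frontier N traj|%:R^-1 else 0
  | _ => 0
  end.

Definition vhat n (N : 'I_n -> seq 'I_n) (traj : seq ('I_n * R)) (s : 'I_n) : R :=
  (nth (s, 0) traj (find (fun sv => s \in N sv.1) traj)).2.

Definition greedy_set n (N : 'I_n -> seq 'I_n) (traj : seq ('I_n * R)) : {set 'I_n} :=
  [set s in frontier N traj |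
     [forall s', (s' \in frontier N traj) ==> (vhat N traj s' <= vhat N traj s)]].

Definition greedy_policy n (N : 'I_n -> seq 'I_n) (traj : seq ('I_n * R))
    (tok : token n) : R :=
  match tok with
  | TS s => if s \in greedy_set N traj then #|greedy_set N traj|%:R^-1 else 0
  | _ => 0
  end.

Definition implements d n (T B : nat) (M : transformer d n)
    (policy : ('I_n -> seq 'I_n) -> seq ('I_n * R) -> token n -> R) : Prop :=
  forall (root : 'I_n) (N : 'I_n -> seq 'I_n) (traj : seq ('I_n * R)),
    is_tree B root N -> valid_traj T root N traj ->
    next_token_dist M (encode N traj) (policy N traj).

End Transformer.

(* The trace consists of markers (the tokens ? and V_v) interleaved with state tokens.  Layer 1
   lets every position attend by hardmax to the most recent marker, the positional bonus
   j/(j+1) < 1 breaking ties in favour of the latest one, and multiplies the one-hot state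
   coordinates of the position by 10 if that marker is ? and by 1 + beta v if it is V_v: the
   token S_(s_i) following a ? thus contributes 10, and each child of s_i, listed after
   V_(v_i), contributes 1 + beta v_i.  Layer 2 averages uniformly over the prefix and rescales
   by its length, so at the final ? coordinate s holds
     10 [s expanded] + [s has an expanded parent] (1 + beta vhat(s)),
   since a state has at most one parent and a trajectory never revisits a state.  This is
   1 + beta vhat(s) in [1, 5/4] exactly on the frontier, and 0 or at least 10 elsewhere, so the
   bump z |-> 2 - (z - 5/4)^2 puts frontier states above 31/16, increasingly in vhat, and all
   other states below 7/16; layer 3 is the identity.  With beta = 0 all frontier logits tie
   (uniform sampling), with beta = 1/4 the argmax is the set of frontier states of largest vhat
   (greedy sampling). *)

From HB Require Import structures.
From mathcomp Require Import all_boot all_order all_algebra.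
From mathcomp Require Import reals.
From mathcomp Require Import ring lra.
Import Order.TTheory GRing.Theory Num.Theory.
Local Open Scope ring_scope.
Set Implicit Arguments.
Unset Strict Implicit.
Unset Printing Implicit Defensive.

Section Equicontinuity.
Variables (R : realType) (d : nat).
Implicit Types (F G : 'I_d -> 'cV[R]_d -> R) (x y : 'cV[R]_d).

Definition equicontinuous F := forall x (eps : R), 0 < eps ->
  exists2 delta : R, 0 < delta & forall y,
    (forall j, `|y j 0 - x j 0| < delta) -> forall i, `|F i y - F i x| < eps.

Lemma equicontinuous_cst (c : 'I_d -> R) : equicontinuous (fun i _ => c i).
Proof. by move=> x eps eps_gt0; exists 1 => // y _ i; rewrite subrr normr0. Qed.

Lemma equicontinuous_coord (g : 'I_d -> 'I_d) : equicontinuous (fun i y => y (g i) 0).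
Proof. by move=> x eps eps_gt0; exists eps => // y near_y i; apply: near_y. Qed.

Lemma equicontinuousN F : equicontinuous F -> equicontinuous (fun i y => - F i y).
Proof.
move=> contF x eps /(contF x)[delta delta_gt0 near_F].
by exists delta => // y /near_F near_y i; rewrite -opprD normrN.
Qed.

Lemma equicontinuous_pair F G x (eps : R) :
  equicontinuous F -> equicontinuous G -> 0 < eps ->
  exists2 delta : R, 0 < delta & forall y, (forall j, `|y j 0 - x j 0| < delta) ->
    forall i, `|F i y - F i x| < eps /\ `|G i y - G i x| < eps.
Proof.
move=> contF contG eps_gt0.
have [dF dF_gt0 nearF] := contF x eps eps_gt0.
have [dG dG_gt0 nearG] := contG x eps eps_gt0.
exists (Num.min dF dG) => [|y near_y i]; first by rewrite lt_min dF_gt0.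
by split; [apply: nearF | apply: nearG] => j;
  have := near_y j; rewrite lt_min => /andP[].
Qed.

Lemma equicontinuousD F G : equicontinuous F -> equicontinuous G ->
  equicontinuous (fun i y => F i y + G i y).
Proof.
move=> contF contG x eps eps_gt0.
have [|delta delta_gt0 near] := equicontinuous_pair x contF contG (_ : 0 < eps / 2).
  by rewrite divr_gt0.
exists delta => // y /near near_y i; have [nF nG] := near_y i.
have -> : F i y + G i y - (F i x + G i x) = (F i y - F i x) + (G i y - G i x) by ring.
apply: le_lt_trans (ler_normD _ _) _; lra.
Qed.

Lemma normr_bounded (c : 'I_d -> R) : exists2 b : R, 0 <= b & forall i, `|c i| <= b.
Proof.
exists (\sum_j `|c j|) => [|i]; first by rewrite sumr_ge0.
by rewrite (bigD1 i) //= lerDl sumr_ge0.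
Qed.

Lemma equicontinuousM F G : equicontinuous F -> equicontinuous G ->
  equicontinuous (fun i y => F i y * G i y).
Proof.
move=> contF contG x eps eps_gt0.
have [bF bF_ge0 boundF] := normr_bounded (fun i => F i x).
have [bG bG_ge0 boundG] := normr_bounded (fun i => G i x).
pose e := Num.min 1 (eps / (bF + bG + 1)).
have e_gt0 : 0 < e by rewrite lt_min ltr01 divr_gt0 // ltr_wpDl // addr_ge0.
have e_le1 : e <= 1 by rewrite ge_min lexx.
have e_small : e * (bF + bG + 1) <= eps.
  by rewrite -ler_pdivlMr ?ltr_wpDl ?addr_ge0 // ge_min lexx orbT.
have [delta delta_gt0 near] := equicontinuous_pair x contF contG e_gt0.
exists delta => // y /near near_y i; have [nearF nearG] := near_y i.
have := boundF i; have := boundG i; move: nearF nearG.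
move: (F i y) (F i x) (G i y) (G i x) e_gt0 e_le1 e_small => a a' b b' *.
have -> : a * b - a' * b' = (a - a') * (b - b') + (a - a') * b' + a' * (b - b').
  by ring.
apply: le_lt_trans (ler_normD _ _) _; apply: le_lt_trans (lerD (ler_normD _ _) (lexx _)) _.
rewrite !normrM; have := normr_ge0 (a - a'); have := normr_ge0 (b - b'); nra.
Qed.

Lemma equicontinuous_piecewise_continuous F : equicontinuous F ->
  piecewise_continuous (fun y => \col_i F i y).
Proof.
move=> contF; exists [:: [::]]; split => // _ [<- | //] x _ eps /(contF x)[delta ? near].
by exists delta => // y _ /near near_y i; rewrite !mxE.
Qed.

End Equicontinuity.

Ltac equicontinuity := repeat first
  [ apply: equicontinuousD | apply: equicontinuousM | apply: equicontinuousN
  | apply: (equicontinuous_coord id) | apply: equicontinuous_coord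
  | apply: equicontinuous_cst ].

Section HardmaxAttention.
Variables (R : realType) (d : nat) (L : layer R d).
Implicit Type X : seq 'cV[R]_d.

Lemma size_block X : size (block L X) = size X.
Proof. by rewrite size_map size_mkseq. Qed.

Lemma nth_block X j : (j < size X)%N ->
  (block L X)`_j = attn_col L X j + lf L (attn_col L X j).
Proof. by move=> lt_j; rewrite (nth_map 0) ?size_mkseq // nth_mkseq. Qed.

Lemma block_id X : lV L = 0 -> (forall x, lf L x = 0) -> block L X = X.
Proof.
move=> V0 f0; apply: (@eq_from_nth _ 0) => [|j]; first by rewrite size_block.
by rewrite size_block => lt_j; rewrite nth_block // f0 /attn_col V0 mul0mx !addr0.
Qed.

Lemma attn_col_argmax X j i0 : (i0 <= j)%N ->
  (forall i, (i <= j)%N -> i != i0 -> score L X j i < score L X j i0) ->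
  attn_col L X j = X`_j + lV L *m X`_i0.
Proof.
move=> le_i0j max_i0; rewrite /attn_col.
set sc := score L X j.
have le_sc i : (i <= j)%N -> sc i <= sc i0.
  by move=> le_ij; have [->|ne_i] := eqVneq i i0; [|apply/ltW/max_i0].
have -> : \big[Num.max/sc 0%N]_(i < j.+1) sc i = sc i0.
  apply/le_anti/andP; split.
    by apply: bigmax_le => [|i _]; apply: le_sc; rewrite // -ltnS.
  exact: (le_bigmax _ (fun i : 'I_j.+1 => sc i) (Ordinal (le_i0j : (i0 < j.+1)%N))).
have -> : [seq i <- iota 0 j.+1 | sc i == sc i0] = [:: i0].
  rewrite (@eq_in_filter _ _ (pred1 i0)) => [|i]; last first.
    rewrite mem_iota add0n => /= lt_ij.
    by have [->|ne_i] := eqVneq i i0; rewrite ?eqxx // lt_eqF ?max_i0.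
  by rewrite filter_pred1_uniq ?iota_uniq // mem_iota.
by rewrite big_seq1 /= invr1 scale1r.
Qed.
Lemma attn_col_mean X j : lQ L = 0 ->
  attn_col L X j = X`_j + lV L *m ((j.+1)%:R^-1 *: \sum_(i < j.+1) X`_i).
Proof.
move=> Q0; have sc0 i : score L X j i = 0 by rewrite /score Q0 mulmx0 mul0mx mxE.
rewrite /attn_col.
have -> : \big[Num.max/score L X j 0%N]_(i < j.+1) score L X j i = 0.
  by elim/big_ind: _ => [|x y -> ->|i _]; rewrite ?sc0 ?maxxx.
rewrite (@eq_in_filter _ _ predT) => [|i _]; last by rewrite sc0 eqxx.
by rewrite filter_predT size_iota -(big_mkord xpredT) /index_iota subn0.
Qed.

End HardmaxAttention.

Section DeltaProducts.
Variables (R : ringType) (d : nat).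

Lemma mulmx_delta_col (a b : 'I_d) (v : 'cV[R]_d) i :
  (delta_mx a b *m v) i 0 = (i == a)%:R * v b 0.
Proof.
rewrite mxE (bigD1 b) //= big1 ?addr0 => [|k ne_kb]; first by rewrite mxE eqxx andbT.
by rewrite mxE (negPf ne_kb) andbF mul0r.
Qed.

Lemma delta_form (u v : 'cV[R]_d) a b : (u^T *m delta_mx a b *m v) 0 0 = u a 0 * v b 0.
Proof.
rewrite -mulmxA mxE (bigD1 a) //= big1 ?addr0 => [|k ne_ka].
  by rewrite mxE mulmx_delta_col eqxx mul1r.
by rewrite mulmx_delta_col (negPf ne_ka) mul0r mulr0.
Qed.

End DeltaProducts.

Section SeqFacts.
Variable T : eqType.

Lemma InP (x : T) s : reflect (List.In x s) (x \in s).
Proof.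
elim: s => [|y s IH] /=; first by right.
rewrite inE; apply: (iffP orP) => [[/eqP ->|/IH]|[->|/IH]]; by [left|right|left|right].
Qed.

Lemma NoDup_map_uniq (U : Type) (f : T -> U) (s : seq T) :
  injective f -> uniq s -> List.NoDup (map f s).
Proof.
move=> f_inj; elim: s => [|x s IH] /= => [_|/andP[x_notin /IH]].
  exact: List.NoDup_nil.
by constructor=> //; case/List.in_map_iff=> y [/f_inj -> /InP]; apply/negP.
Qed.

Lemma sum_eq_uniq (R : numDomainType) (s : seq T) x : uniq s ->
  \sum_(y <- s) (y == x)%:R = (x \in s)%:R :> R.
Proof.
move=> s_uniq; rewrite -natr_sum -(count_uniq_mem x s_uniq).
by rewrite -sum1_count [in RHS]big_mkcond.
Qed.

End SeqFacts.

Lemma last_filter_index (T : Type) (p : pred T) (x0 : T) (s : seq T) j :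
  p (nth x0 s 0) -> (j < size s)%N ->
  exists2 i, (i <= j)%N & [/\ p (nth x0 s i),
    nth x0 s i = last x0 [seq x <- take j.+1 s | p x]
    & forall k, (i < k <= j)%N -> ~~ p (nth x0 s k)].
Proof.
move=> p_head; elim: j => [|j IH] lt_js.
  exists 0%N => //; split=> // [|k]; last by case: k.
  by case: s p_head lt_js => //= x s px _; rewrite take0 /= px.
rewrite (take_nth x0 lt_js) filter_rcons.
case: ifP => [p_j|not_p_j].
  exists j.+1 => //; split=> // [|k]; first by rewrite last_rcons.
  by case/andP=> /leq_trans/[apply]; rewrite ltnn.
have [i le_ij [p_i eq_i after_i]] := IH (ltnW lt_js).
exists i; first exact: leqW.
split=> // k /andP[lt_ik]; rewrite leq_eqVlt => /orP[/eqP -> | lt_kj].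
  by rewrite not_p_j.
by apply: after_i; rewrite lt_ik.
Qed.

Section ArgmaxStates.
Variables (R : realType) (d n : nat) (M : transformer R d n) (inp : seq (token R n)).

Definition is_state (t : token R n) : bool := if t is TS _ then true else false.

Definition state_dist (G : {set 'I_n}) (t : token R n) : R :=
  if t is TS s then (if s \in G then #|G|%:R^-1 else 0) else 0.

Lemma next_token_dist_states (G : {set 'I_n}) : G != set0 ->
  (forall t, is_argmax M inp t <-> exists2 s, t = TS R s & s \in G) ->
  next_token_dist M inp (state_dist G).
Proof.
move=> /set0Pn[s0 G_s0] argmaxE; pose A := map (@TS R n) (enum G).
have InA t : List.In t A <-> exists2 s, t = TS R s & s \in G.
  rewrite List.in_map_iff; split=> [[s [<- /InP]]|[s -> G_s]].
    by rewrite mem_enum; exists s.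
  by exists s; split=> //; apply/InP; rewrite mem_enum.
exists A; split; [|split; [|split; [|split]]].
- have : s0 \in enum G by rewrite mem_enum.
  by rewrite /A; case: (enum G).
- by apply: NoDup_map_uniq (enum_uniq _) => s s' [].
- by move=> t; rewrite InA argmaxE.
- by move=> t /InA[s -> G_s]; rewrite /= G_s size_map -cardE.
- move=> [|||s|a] notA //=; case: ifP => // G_s.
  by case: notA; apply/InA; exists s.
Qed.

Definition argmax_states (F : {set 'I_n}) : {set 'I_n} :=
  [set s in F | [forall s' in F, logit M inp (TS R s') <= logit M inp (TS R s)]].

Lemma argmax_states_neq0 F : F != set0 -> argmax_states F != set0.
Proof.
move=> /set0Pn[s0 F_s0]; apply/set0Pn.
have [s F_s max_s] :=
  @arg_maxP _ R _ s0 (fun s => s \in F) (fun s => logit M inp (TS R s)) F_s0.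
by exists s; rewrite inE F_s; apply/forall_inP.
Qed.

Lemma is_argmax_states (F : {set 'I_n}) (a : R) : F != set0 ->
  (forall s, s \in F -> a < logit M inp (TS R s)) ->
  (forall s, s \notin F -> logit M inp (TS R s) <= a) ->
  (forall t, ~~ is_state t -> logit M inp t <= a) ->
  forall t, is_argmax M inp t <-> exists2 s, t = TS R s & s \in argmax_states F.
Proof.
move=> /set0Pn[s0 F_s0] above_F below_F below_other t; split.
  move=> [_ max_t]; have /(lt_le_trans (above_F _ F_s0)) a_lt := max_t (TS R s0) I.
  case: t a_lt max_t => [|||s|x] a_lt max_t; try by rewrite ltNge below_other in a_lt.
  have F_s : s \in F by apply: contraLR a_lt => /below_F; rewrite -leNgt.
  by exists s; rewrite // inE F_s; apply/forall_inP => s' _; apply: max_t.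
move=> [s -> /setIdP[F_s /forall_inP max_s]]; split=> // t' _.
have a_lt_s := above_F _ F_s.
case: t' => [|||s'|x]; try by apply: le_trans (below_other _ _) (ltW a_lt_s).
have [/max_s //|/below_F le_a] := boolP (s' \in F).
exact: le_trans le_a (ltW a_lt_s).
Qed.

End ArgmaxStates.

Section Trajectories.
Variables (R : realType) (n T : nat) (root : 'I_n) (N : 'I_n -> seq 'I_n).
Variable traj : seq ('I_n * R).
Hypothesis traj_valid : valid_traj T root N traj.

Definition has_parent (s : 'I_n) : bool := has (fun sv => s \in N sv.1) traj.

Lemma valid_traj_uniq : uniq (map fst traj).
Proof.
have [_ [_ [_ [in_frontier _]]]] := traj_valid.
suff uniq_take k : uniq (map fst (take k traj)) by rewrite -(take_size traj).
elim: k => [|k IH]; first by rewrite take0.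
have [lt_k|le_k] := ltnP k (size traj); last first.
  by rewrite take_oversize ?(leqW le_k) // -(take_oversize le_k).
rewrite (take_nth (root, 0) lt_k) map_rcons rcons_uniq IH andbT.
case: k lt_k {IH} => [|k] lt_k; first by rewrite take0.
by have := in_frontier k lt_k; rewrite inE => /andP[].
Qed.

Lemma sum_parent (g : 'I_n * R -> R) s :
  (forall x y, s \in N x -> s \in N y -> x = y) ->
  \sum_(sv <- traj) (s \in N sv.1)%:R * g sv =
  (has_parent s)%:R * g (nth (s, 0) traj (find (fun sv => s \in N sv.1) traj)).
Proof.
rewrite /has_parent => unique_parent; have := valid_traj_uniq.
elim: (traj) => [|sv l IH] /=; first by rewrite big_nil mul0r.
move=> /andP[sv_notin /IH {}IH]; rewrite big_cons IH.
case: ifP => [s_in|_]; last by rewrite mul0r add0r.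
suff -> : has (fun sv => s \in N sv.1) l = false by rewrite mul0r addr0.
apply/negbTE/hasP => -[sv' sv'_in s_in'].
by move: sv_notin; rewrite (unique_parent _ _ s_in s_in') (map_f fst sv'_in).
Qed.

Lemma vhat_bounds s : has_parent s -> 0 <= vhat N traj s <= 1.
Proof.
have [_ [_ [val_bounds _]]] := traj_valid.
by move=> s_child; apply/val_bounds/InP/mem_nth; rewrite -has_find.
Qed.

End Trajectories.

Section Construction.
Variables (R : realType) (n d : nat) (beta : R).
Hypothesis wide : (5 + n <= d)%N.

Local Notation tQ := (TQ R n).

Definition feature_coord (c : nat) (lt_c5 : (c < 5)%N) : 'I_d :=
  Ordinal (leq_trans lt_c5 (leq_trans (leq_addr n 5) wide)).
Definition val_coord := @feature_coord 0 isT.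
Definition marker_coord := @feature_coord 1 isT.
Definition one_coord := @feature_coord 2 isT.
Definition len_coord := @feature_coord 3 isT.
Definition query_coord := @feature_coord 4 isT.

Lemma state_coord_subproof (s : 'I_n) : (5 + s < d)%N.
Proof. by apply: leq_trans wide; rewrite ltn_add2l. Qed.
Definition state_coord (s : 'I_n) : 'I_d := Ordinal (state_coord_subproof s).

Definition is_marker (t : token R n) : bool :=
  match t with TQ | TV _ => true | _ => false end.

(* Coordinate 0 holds the value of V_v, 1 flags markers (plus the positional bonus), 2 and 3
   hold the positional constants 1 and j + 1, 4 flags ?, and 5 + s is the one-hot coordinate of
   state s.  Layer 1 adds coordinates 0 and 4 of the attended marker to the current position: at
   a state token, whose own coordinates 0 and 4 vanish, they then describe that marker, and
   elsewhere they only multiply state coordinates equal to 0. *)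
Definition tok_feat (t : token R n) (i : 'I_d) : R :=
  match nat_of_ord i with
  | 0 => if t is TV a then a else 0
  | 1 => (is_marker t)%:R
  | 4 => if t is TQ then 1 else 0
  | k.+4.+1 => if t is TS c then (c == k :> nat)%:R else 0
  | _ => 0
  end.

Definition pos_bonus (j : nat) : R := j%:R / (j%:R + 1).

Definition pos_feat (j : nat) (i : 'I_d) : R :=
  match nat_of_ord i with
  | 1 => pos_bonus j
  | 2 => 1
  | 3 => j%:R + 1
  | _ => 0
  end.

Definition embed (t : token R n) : 'cV[R]_d := \col_i tok_feat t i.
Definition posv (j : nat) : 'cV[R]_d := \col_i pos_feat j i.

Definition copy_mask (i : 'I_d) : R := match nat_of_ord i with 0 | 4 => 1 | _ => 0 end.
Definition state_mask (i : 'I_d) : R := (5 <= i)%:R.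

Definition marker_weight (t : token R n) : R := if t is TV a then 1 + beta * a else 10.

Definition bump (z : R) : R := 2 - (z - 5 / 4) * (z - 5 / 4).

Definition layer1 : layer R d :=
  Layer (delta_mx marker_coord one_coord) 1%:M (diag_mx (\row_i copy_mask i))
    (fun y => \col_i (state_mask i *
       ((10 * y query_coord 0 + (1 - y query_coord 0) * (1 + beta * y val_coord 0) - 1)
        * y i 0))).

Definition layer2 : layer R d :=
  Layer 0 0 (diag_mx (\row_i state_mask i))
    (fun y => \col_i (state_mask i * (bump (y len_coord 0 * y i 0) - y i 0))).

Definition layer3 : layer R d := Layer 0 0 0 (fun=> 0).

Definition unembed (t : token R n) : 'rV[R]_d :=
  if t is TS s then delta_mx 0 (state_coord s) else 0.

Definition policy_transformer : transformer R d n :=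
  Transformer embed posv [:: layer1; layer2; layer3] unembed.

Lemma wf_policy_transformer : wf_transformer policy_transformer.
Proof.
split=> [L /= [<-|[<-|[<-|//]]]|].
- by apply: equicontinuous_piecewise_continuous; equicontinuity.
- by apply: equicontinuous_piecewise_continuous; rewrite /bump; equicontinuity.
- exists [:: [::]]; split=> // _ [<-|//] x _ eps eps_gt0.
  by exists 1 => // y _ _ i; rewrite subrr normr0.
exists val_coord, (\col_i (i == marker_coord)%:R); split; first by rewrite mxE.
split=> [a|]; last by case=> [|||s|a] // _; rewrite mxE.
apply/matrixP=> i j; rewrite !mxE ord1 eqxx andbT.
case: i => [[|[|k]] lt_i]; rewrite /tok_feat /= ?(mulr1, mulr0, addr0, add0r) //.
by case: k {lt_i} => [|[|[|]]].
Qed.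

Definition embed_seq (inp : seq (token R n)) : seq 'cV[R]_d :=
  mkseq (fun j => embed (nth tQ inp j) + posv j) (size inp).

Lemma size_embed_seq inp : size (embed_seq inp) = size inp.
Proof. exact: size_mkseq. Qed.

Lemma embed_seqE inp j i : (j < size inp)%N ->
  (embed_seq inp)`_j i 0 = tok_feat (nth tQ inp j) i + pos_feat j i.
Proof. by move=> lt_j; rewrite nth_mkseq // !mxE. Qed.

Lemma tok_feat_state t s :
  tok_feat t (state_coord s) = if t is TS c then (c == s)%:R else 0.
Proof. by case: t. Qed.
Lemma pos_feat_state j s : pos_feat j (state_coord s) = 0. Proof. by []. Qed.
Lemma copy_mask_state s : copy_mask (state_coord s) = 0. Proof. by []. Qed.
Lemma state_mask_state s : state_mask (state_coord s) = 1. Proof. by []. Qed.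
Definition state_coordE :=
  (tok_feat_state, pos_feat_state, copy_mask_state, state_mask_state).

Lemma pos_bonus_ge0 j : 0 <= pos_bonus j.
Proof. by rewrite divr_ge0 // addr_ge0. Qed.

Lemma pos_bonus_lt1 j : pos_bonus j < 1.
Proof. by rewrite ltr_pdivrMr ?mul1r ?ltrDl // ltr_wpDl. Qed.

Lemma pos_bonus_lt i j : (i < j)%N -> pos_bonus i < pos_bonus j.
Proof.
rewrite -(ltr_nat R) => lt_ij; have := ler0n R i.
by rewrite /pos_bonus ltr_pdivrMr ?ltr_wpDl // mulrAC ltr_pdivlMr ?ltr_wpDl //; nra.
Qed.

Lemma score_layer1 inp j i : (i < size inp)%N -> (j < size inp)%N ->
  score layer1 (embed_seq inp) j i = (is_marker (nth tQ inp i))%:R + pos_bonus i.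
Proof.
by move=> lt_i lt_j; rewrite /score trmx1 mulmx1 delta_form !embed_seqE //= add0r mulr1.
Qed.

Lemma attn_layer1 inp j : is_marker (nth tQ inp 0) -> (j < size inp)%N ->
  exists2 i, (i < size inp)%N &
    nth tQ inp i = last tQ [seq t <- take j.+1 inp | is_marker t] /\
    attn_col layer1 (embed_seq inp) j = (embed_seq inp)`_j + lV layer1 *m (embed_seq inp)`_i.
Proof.
move=> mark0 lt_j; have [i le_ij [mark_i eq_i after_i]] := last_filter_index mark0 lt_j.
have lt_i := leq_ltn_trans le_ij lt_j.
exists i => //; split=> //; apply: attn_col_argmax => // k le_kj ne_ki.
have lt_k := leq_ltn_trans le_kj lt_j.
rewrite !score_layer1 // mark_i.
have := pos_bonus_ge0 i; have := pos_bonus_ge0 k; have := pos_bonus_lt1 k.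
case: (ltngtP k i) ne_ki => [lt_ki _|lt_ik _|-> //].
  by have := pos_bonus_lt lt_ki; case: is_marker => /=; lra.
by rewrite (negPf (after_i k _)) ?lt_ik //=; lra.
Qed.

Lemma is_marker_last m (l : seq (token R n)) :
  is_marker m -> is_marker (last m [seq t <- l | is_marker t]).
Proof. by elim: l m => //= t l IH m mark_m; case: ifP => [mark_t|_] /=; apply: IH. Qed.

Lemma layer1_state inp j s : is_marker (nth tQ inp 0) -> (j < size inp)%N ->
  (block layer1 (embed_seq inp))`_j (state_coord s) 0 =
  marker_weight (last tQ [seq t <- take j.+1 inp | is_marker t])
    * tok_feat (nth tQ inp j) (state_coord s).
Proof.
move=> mark0 lt_j; have [i lt_i [eq_i attnE]] := attn_layer1 mark0 lt_j.
have := is_marker_last (take j.+1 inp) (isT : is_marker tQ); rewrite -eq_i.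
rewrite nth_block ?size_embed_seq // attnE /= !mul_diag_mx !mxE !embed_seqE //.
rewrite !state_coordE /tok_feat /pos_feat /copy_mask /= => mark_i.
by case: (nth tQ inp i) mark_i => [|||c|a] // _;
  case: (nth tQ inp j) => [|||c|a'] /=; ring.
Qed.

Lemma layer1_len inp j : (j < size inp)%N ->
  (block layer1 (embed_seq inp))`_j len_coord 0 = j%:R + 1.
Proof.
move=> lt_j; rewrite nth_block ?size_embed_seq // /attn_col [lV _]/= [lf _]/=.
rewrite mul_diag_mx !mxE embed_seqE // [copy_mask _]/= [state_mask _]/= !mul0r !addr0.
by rewrite /tok_feat /pos_feat /= add0r.
Qed.

Fixpoint weighted_count (k : 'I_d) (m : token R n) (l : seq (token R n)) : R :=
  if l is t :: l' then
    let m' := if is_marker t then t else m in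
    marker_weight m' * tok_feat t k + weighted_count k m' l'
  else 0.

Lemma weighted_countE k m l : weighted_count k m l =
  \sum_(j < size l)
     marker_weight (last m [seq t <- take j.+1 l | is_marker t]) * tok_feat (nth tQ l j) k.
Proof.
elim: l m => [|t l IH] m /=; first by rewrite big_ord0.
by rewrite big_ord_recl /= take0 IH; case: ifP.
Qed.

Lemma weighted_count_cat k m l1 l2 : weighted_count k m (l1 ++ l2) =
  weighted_count k m l1 + weighted_count k (last m [seq t <- l1 | is_marker t]) l2.
Proof.
elim: l1 m => [|t l1 IH] m /=; first by rewrite add0r.
by rewrite IH addrA; case: ifP.
Qed.

Lemma logit_state inp s :
  (0 < size inp)%N -> is_marker (nth tQ inp 0) -> last tQ inp = tQ ->
  logit policy_transformer inp (TS R s) = bump (weighted_count (state_coord s) tQ inp).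
Proof.
move=> inp_gt0 mark0 lastQ; have lt_last : ((size inp).-1 < size inp)%N by rewrite prednK.
rewrite /logit /run /= -/(embed_seq inp) block_id // -rowE mxE.
rewrite nth_block ?size_block ?size_embed_seq // attn_col_mean // prednK //.
rewrite [lV _]/= [lf _]/= mul_diag_mx !mxE summxE !state_coordE.
rewrite layer1_state ?layer1_len // nth_last lastQ !state_coordE /= [state_mask _]/=.
rewrite !(mulr0, add0r, mul0r, addr0, mul1r) natr1 prednK //.
rewrite mulrA mulfV ?pnatr_eq0 -?lt0n //.
rewrite mul1r addrC subrK weighted_countE; congr bump.
by apply: eq_bigr => k _; rewrite layer1_state.
Qed.

Lemma weighted_count_states k m (cs : seq 'I_n) :
  weighted_count k m (map (@TS R n) cs) =
  marker_weight m * \sum_(c <- cs) tok_feat (TS R c) k.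
Proof.
elim: cs => [|c cs IH] /=; first by rewrite big_nil mulr0.
by rewrite IH big_cons mulrDr.
Qed.

Lemma weighted_count_block s m x v (cs : seq 'I_n) rest :
  weighted_count (state_coord s) m
    (([:: tQ; TS R x; TPct R n; TV n v; THash R n] ++ map (@TS R n) cs) ++ rest) =
  10 * (x == s)%:R + (1 + beta * v) * \sum_(c <- cs) (c == s)%:R
  + weighted_count (state_coord s) (TV n v) rest.
Proof.
rewrite -catA !weighted_count_cat weighted_count_states /= !state_coordE.
have -> : [seq t <- map (@TS R n) cs | is_marker t] = [::] by elim: cs.
by rewrite !mulr0 !add0r addr0 addrA.
Qed.

Lemma weighted_count_encode (N : 'I_n -> seq 'I_n) traj m s :
  (forall x, uniq (N x)) ->
  weighted_count (state_coord s) m (encode N traj) =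
  \sum_(sv <- traj) (10 * (sv.1 == s)%:R + (s \in N sv.1)%:R * (1 + beta * sv.2)).
Proof.
move=> N_uniq; elim: traj m => [|[x v] traj IH] m.
  by rewrite big_nil /= state_coordE mulr0 addr0.
rewrite /encode map_cons -[flatten (_ :: _)]/(_ ++ flatten _) -catA weighted_count_block.
rewrite -/(encode N traj) IH big_cons.
by rewrite /= sum_eq_uniq // (mulrC (1 + beta * v)).
Qed.

Lemma logit_not_state inp t : ~~ is_state t -> logit policy_transformer inp t = 0.
Proof. by case: t => // *; rewrite /logit /= mul0mx mxE. Qed.

Lemma bump_quarter_mono :
  {in [pred v : R | 0 <= v <= 1] &, {mono (fun v => bump (1 + 1 / 4 * v)) : v w / v <= w}}.
Proof. by apply: le_mono_in => v w /andP[? ?] /andP[? ?] ?; rewrite /bump; nra. Qed.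

Section Encoding.
Variables (T B : nat) (root : 'I_n) (N : 'I_n -> seq 'I_n) (traj : seq ('I_n * R)).
Hypotheses (tree : is_tree B root N) (traj_valid : valid_traj T root N traj).

Lemma logit_encode s : logit policy_transformer (encode N traj) (TS R s) =
  bump (10 * (s \in map fst traj)%:R
        + (has_parent N traj s)%:R * (1 + beta * vhat N traj s)).
Proof.
have [N_uniq [_ [_ [unique_parent _]]]] := tree.
have first_Q : nth tQ (encode N traj) 0 = tQ by case: traj.
rewrite logit_state ?first_Q ?size_cat ?addn1 // ?last_cat //.
rewrite weighted_count_encode // big_split /= (sum_parent traj_valid); last first.
  by move=> x y; apply: unique_parent.
rewrite -big_distrr -(big_map fst xpredT (fun x => (x == s)%:R)) sum_eq_uniq //.
exact: valid_traj_uniq traj_valid.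
Qed.

Lemma logit_frontier s : s \in frontier N traj ->
  logit policy_transformer (encode N traj) (TS R s) = bump (1 + beta * vhat N traj s).
Proof.
rewrite inE logit_encode => /andP[par notsel].
by rewrite /has_parent par (negPf notsel) mulr0 mul1r add0r.
Qed.

Hypothesis beta_bounds : 0 <= beta <= 1 / 4.

Lemma logit_frontier_gt s : s \in frontier N traj ->
  7 / 16 < logit policy_transformer (encode N traj) (TS R s).
Proof.
move=> s_frontier; rewrite logit_frontier //.
move: s_frontier; rewrite inE => /andP[/(vhat_bounds traj_valid)/andP[v_ge0 v_le1] _].
have [beta_ge0 beta_le] := andP beta_bounds.
have : beta * vhat N traj s <= 1 / 4 * 1 by apply: ler_pM.
by have := mulr_ge0 beta_ge0 v_ge0; rewrite /bump; nra.
Qed.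

Lemma logit_not_frontier s : s \notin frontier N traj ->
  logit policy_transformer (encode N traj) (TS R s) <= 7 / 16.
Proof.
rewrite inE negb_and negbK logit_encode /bump.
have [sel _|notsel] := boolP (s \in map fst traj); last first.
  by rewrite orbF /has_parent => /negPf ->; rewrite /= mulr0n !mulr0 add0r; lra.
suff : 0 <= (has_parent N traj s)%:R * (1 + beta * vhat N traj s) by rewrite /= mulr1n; nra.
have [par|_] := boolP (has_parent N traj s); last by rewrite mul0r.
have [/andP[v_ge0 _] /andP[beta_ge0 _]] := (vhat_bounds traj_valid par, beta_bounds).
by rewrite mul1r addr_ge0 ?mulr_ge0.
Qed.

Lemma policy_transformer_dist :
  next_token_dist policy_transformer (encode N traj)
    (state_dist (argmax_states policy_transformer (encode N traj) (frontier N traj))).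
Proof.
have [_ [_ [_ [_ frontier_neq0]]]] := traj_valid.
apply: next_token_dist_states; first exact: argmax_states_neq0.
apply: (is_argmax_states frontier_neq0 logit_frontier_gt logit_not_frontier).
by move=> t /logit_not_state ->; lra.
Qed.

End Encoding.

End Construction.

Section Policies.
Variables (R : realType) (n d T B : nat) (wide : (5 + n <= d)%N).

Lemma uniform_policy_implemented :
  implements T B (policy_transformer 0 wide) (@uniform_policy R n).
Proof.
move=> root N traj tree traj_valid.
have beta_bounds : 0 <= (0 : R) <= 1 / 4 by apply/andP; split; lra.
have := policy_transformer_dist wide tree traj_valid beta_bounds.
suff -> : argmax_states (policy_transformer 0 wide) (encode N traj) (frontier N traj) =
          frontier N traj by [].
apply/setP=> s; rewrite inE andb_idr // => s_frontier; apply/forall_inP=> s' s'_frontier.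
by rewrite !(logit_frontier _ wide tree traj_valid) // !mul0r.
Qed.

Lemma greedy_policy_implemented :
  implements T B (policy_transformer (1 / 4) wide) (@greedy_policy R n).
Proof.
move=> root N traj tree traj_valid.
have beta_bounds : 0 <= (1 / 4 : R) <= 1 / 4 by apply/andP; split; lra.
have := policy_transformer_dist wide tree traj_valid beta_bounds.
suff -> : argmax_states (policy_transformer (1 / 4) wide) (encode N traj) (frontier N traj) =
          greedy_set N traj by [].
apply/setP=> s; rewrite [in LHS]inE [in RHS]inE; apply: andb_id2l => s_frontier.
apply: eq_forallb => s'; apply: implyb_id2l => s'_frontier.
rewrite !(logit_frontier _ wide tree traj_valid) //.
by apply: bump_quarter_mono; rewrite inE; apply: (vhat_bounds traj_valid);
  [move: s'_frontier | move: s_frontier]; rewrite inE => /andP[].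
Qed.

End Policies.

Theorem theorem1 (R : realType) (T B : nat) (hT : (1 <= T)%N) (hB : (1 <= B)%N) :
  (exists M : transformer R (10 + T * B) (T * B + 1),
      size (layers M) = 3%N /\ wf_transformer M /\
      implements T B M (@uniform_policy R (T * B + 1))) /\
  (exists M : transformer R (10 + T * B) (T * B + 1),
      size (layers M) = 3%N /\ wf_transformer M /\
      implements T B M (@greedy_policy R (T * B + 1))).
Proof.
have wide : (5 + (T * B + 1) <= 10 + T * B)%N by rewrite addnCA (addnC 10) leq_add2l.
split; [exists (policy_transformer 0 wide) | exists (policy_transformer (1 / 4) wide)].
- by split; [|split; [exact: wf_policy_transformer | exact: uniform_policy_implemented]].
- by split; [|split; [exact: wf_policy_transformer | exact: greedy_policy_implemented]].
Qed.
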